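(* Let $G$ be a finite nonabelian group with $Z(G)\neq 1$. Then $\mathcal{D}(G)-\mathcal{D}(Z(G))\ge 3$.
   Context: $\mathcal{D}(X)$ denotes the number of conjugacy classes of nontrivial subgroups $Y$ of the finite group $X$ with $N_X(Y)\neq Y$. $Z(G)$ is the center of $G$. *)

From mathcomp Require Import all_boot all_fingroup all_solvable.
Set Implicit Arguments. Unset Strict Implicit. Unset Printing Implicit Defensive.
Local Open Scope group_scope.

Definition nonselfnorm_subgroups (gT : finGroupType) (X : {set gT}) :
  {set {set gT}} :=
  [set Y : {set gT} | [&& group_set Y, Y \subset X, Y != 1 & 'N_X(Y) != Y]].

Definition calD (gT : finGroupType) (X : {set gT}) : nat :=
  #|[set Y :^: X | Y in nonselfnorm_subgroups X]|.

From mathcomp Require Import all_boot all_fingroup all_solvable.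
From mathcomp Require Import zify.
Set Implicit Arguments. Unset Strict Implicit. Unset Printing Implicit Defensive.

(* Subgroups of 'Z(G) are normal in G, so each nontrivial proper subgroup of 'Z(G)
   (these are what calD 'Z(G) counts) is a one-element G-class counted by calD G,
   and so is 'Z(G) itself, a proper subgroup as G is nonabelian.  It remains to find
   two non-conjugate noncentral subgroups that are not self-normalizing.
   If G is nilpotent, no proper subgroup is self-normalizing: take a maximal, hence
   normal, subgroup M containing a noncentral element and <[y]> for a noncentral y
   outside M.  Otherwise some noncentral cycle <[x]> misses part of 'Z(G), so
   <[x]> 'Z(G) normalizes <[x]>; and some proper overgroup Y of 'Z(G) is not
   self-normalizing, for otherwise the centralizers of noncentral elements are
   abelian with TI noncentral parts, and the class supports of two of them would
   have more than #|G| elements together.  No conjugate of <[x]> contains 'Z(G). *)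

Local Open Scope group_scope.

Section ConjugatesAndCenter.
Variables (gT : finGroupType) (G : {group gT}).

Lemma conjugates_refl (A : {set gT}) : A \in A :^: G.
Proof. by apply/imsetP; exists 1; rewrite ?conjsg1. Qed.

Lemma conjugates_norm (A : {set gT}) : G \subset 'N(A) -> A :^: G = [set A].
Proof.
move=> nAG; apply/setP=> B; rewrite inE; apply/imsetP/eqP => [[g Gg ->]|->].
  exact/normP/(subsetP nAG).
by exists 1; rewrite ?conjsg1.
Qed.

Lemma conjugates_neq_norm_sub (N A B : {set gT}) :
  G \subset 'N(N) -> N \subset A -> ~~ (N \subset B) -> A :^: G != B :^: G.
Proof.
move=> nNG sNA; apply: contra => /eqP eAB.
have /imsetP[g Gg eA] : A \in B :^: G by rewrite -eAB conjugates_refl.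
by move: sNA; rewrite eA -sub_conjgV (normP (subsetP nNG _ (groupVr Gg))).
Qed.

Lemma sub_center_norm (Y : {set gT}) : Y \subset 'Z(G) -> G \subset 'N(Y).
Proof. by rewrite subsetI centsC => /andP[_ /cents_norm]. Qed.

Lemma noncentral_neq1 (Y : {set gT}) : ~~ (Y \subset 'Z(G)) -> Y != 1.
Proof. by apply: contraNneq => ->; apply: sub1G. Qed.

Lemma nonselfnorm_noncentral (Y : {group gT}) :
  Y \subset G -> ~~ (Y \subset 'Z(G)) -> 'N_G(Y) != Y ->
  (Y : {set gT}) \in nonselfnorm_subgroups G.
Proof. by move=> sYG nzY nNY; rewrite inE groupP sYG noncentral_neq1. Qed.

Lemma noncentral_elt : ~~ abelian G -> exists2 x, x \in G & x \notin 'Z(G).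
Proof.
move=> nabG; apply/subsetPn; apply: contra nabG => sGZ.
by apply/center_idP/eqP; rewrite eqEsubset center_sub.
Qed.

End ConjugatesAndCenter.

Section CenterClasses.
Variables (gT : finGroupType) (G : {group gT}).
Hypotheses (nabG : ~~ abelian G) (ntZ : 'Z(G) != 1).

Lemma center_neqG : 'Z(G) != G :> {set gT}.
Proof. by apply: contra nabG => /eqP/center_idP. Qed.

Lemma nonselfnorm_center_sub (Y : {set gT}) :
  Y \subset 'Z(G) -> Y != G -> group_set Y -> Y != 1 ->
  Y \in nonselfnorm_subgroups G.
Proof.
move=> sYZ neYG gY ntY; rewrite inE gY ntY (subset_trans sYZ (center_sub G)).
by rewrite (setIidPl (sub_center_norm sYZ)) eq_sym.
Qed.

Lemma nonselfnorm_center_nonselfnorm (Y : {set gT}) :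
  Y \in nonselfnorm_subgroups 'Z(G) -> Y \in nonselfnorm_subgroups G.
Proof.
rewrite inE => /and4P[gY sYZ ntY _]; apply: nonselfnorm_center_sub => //.
by apply: contra center_neqG => /eqP eYG; rewrite eqEsubset center_sub -{1}eYG.
Qed.

Lemma center_nonselfnorm : ('Z(G) : {set gT}) \in nonselfnorm_subgroups G.
Proof. exact: nonselfnorm_center_sub (subxx _) center_neqG (groupP _) ntZ. Qed.

Lemma center_notin_nonselfnorm_center :
  ('Z(G) : {set gT}) \notin nonselfnorm_subgroups 'Z(G).
Proof. by rewrite inE (setIidPl (normG _)) eqxx !andbF. Qed.

Lemma conjugates_sub_center (Y : {set gT}) (X : {group gT}) :
  Y \subset 'Z(G) -> X \subset G -> Y :^: X = [set Y].
Proof.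
by move=> sYZ sXG; rewrite conjugates_norm // (subset_trans sXG (sub_center_norm sYZ)).
Qed.

Lemma calD_center_add3 (Y1 Y2 : {set gT}) :
  Y1 \in nonselfnorm_subgroups G -> Y2 \in nonselfnorm_subgroups G ->
  ~~ (Y1 \subset 'Z(G)) -> ~~ (Y2 \subset 'Z(G)) -> Y1 :^: G != Y2 :^: G ->
  (calD 'Z(G) + 3 <= calD G)%N.
Proof.
move=> nsY1 nsY2 nzY1 nzY2 neY12.
pose S := [set [set Y] | Y in nonselfnorm_subgroups 'Z(G)].
have eS : [set Y :^: 'Z(G) | Y in nonselfnorm_subgroups 'Z(G)] = S.
  apply: eq_in_imset => Y; rewrite inE => /and4P[_ sYZ _ _].
  exact: conjugates_sub_center sYZ (center_sub G).
have noncentral_notin_S (W : {set gT}) : ~~ (W \subset 'Z(G)) -> W :^: G \notin S.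
  move=> nzW; apply/imsetP=> -[Y nsY eW].
  move: (conjugates_refl G W) nsY nzW; rewrite eW inE => /eqP->.
  by rewrite inE => /and4P[_ ->].
have noncentral_neqZ (W : {set gT}) :
    ~~ (W \subset 'Z(G)) -> [set 'Z(G) : {set gT}] != W :^: G.
  move=> nzW; apply: contraNneq nzW => eW.
  by move: (conjugates_refl G W); rewrite -eW inE => /eqP->.
have Z_notin_S : [set 'Z(G) : {set gT}] \notin S.
  apply/imsetP=> -[Y nsY /setP/(_ ('Z(G) : {set gT}))].
  rewrite !inE eqxx => /esym/eqP eY.
  by move: nsY; rewrite -eY (negbTE center_notin_nonselfnorm_center).
have sT : [set 'Z(G) : {set gT}] |: (Y1 :^: G |: (Y2 :^: G |: S))
          \subset [set Y :^: G | Y in nonselfnorm_subgroups G].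
  apply/subsetP => W; rewrite !inE => /or4P[/eqP->|/eqP->|/eqP->|].
  - rewrite -(conjugates_sub_center (subxx _) (subxx G)).
    exact: imset_f center_nonselfnorm.
  - exact: imset_f.
  - exact: imset_f.
  case/imsetP=> Y nsY ->; have := nsY; rewrite inE => /and4P[_ sYZ _ _].
  rewrite -(conjugates_sub_center sYZ (subxx G)).
  exact/imset_f/nonselfnorm_center_nonselfnorm.
rewrite /calD eS; apply: leq_trans (subset_leq_card sT).
rewrite !cardsU1 !in_setU1 !negb_or addnC !addnA leq_add2r.
by rewrite !noncentral_notin_S ?noncentral_neqZ ?Z_notin_S ?neY12.
Qed.

End CenterClasses.

Section SelfNormalizingOvergroups.
Variables (gT : finGroupType) (G : {group gT}).

Lemma center_sub_subcent1 x : x \in G -> 'Z(G) \subset 'C_G[x].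
Proof.
move=> Gx; rewrite subsetI center_sub sub_cent1; apply: (subsetP _ x Gx).
by rewrite centsC subsetIr.
Qed.

Lemma center_proper_subcent1 x : x \in G -> x \notin 'Z(G) -> 'Z(G) \proper 'C_G[x].
Proof.
move=> Gx nZx; rewrite properE center_sub_subcent1 //.
by apply/subsetPn; exists x; rewrite ?subcent1_id.
Qed.

Lemma subcent1J x g : g \in G -> 'C_G[x ^ g] = 'C_G[x] :^ g.
Proof. by move=> Gg; rewrite conjIg cent1J conjGid. Qed.

Let S x := class_support ('C_G[x] :\: 'Z(G)) G.

Lemma mem_class_support_subcent1 x y g : y \in G -> y \notin 'Z(G) -> g \in G ->
  'C_G[y] = 'C_G[x] :^ g -> y \in S x.
Proof.
move=> Gy nZy Gg eC; have nZG := normal_norm (center_normal G).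
apply/imset2P; exists (y ^ g^-1) g; rewrite ?conjgKV //.
rewrite inE memJ_norm ?(subsetP nZG) ?groupV // nZy /=.
by rewrite -mem_conjg -eC subcent1_id.
Qed.

Lemma center_class_support_disjoint x : 'Z(G) :&: S x = set0.
Proof.
apply/setP => w; rewrite inE in_set0; apply/andP => -[Zw /imset2P[a g]].
rewrite inE => /andP[nZa _] Gg ew; move: Zw.
by rewrite ew memJ_norm ?(subsetP (normal_norm (center_normal G))) // (negbTE nZa).
Qed.

Lemma indexg_subcent1_gt1 x : x \in G -> x \notin 'Z(G) -> (1 < #|G : 'C_G[x]|)%N.
Proof.
move=> Gx nZx; rewrite indexg_gt1; apply: contra nZx => sGC.
by rewrite inE Gx -sub_cent1 (subset_trans sGC (subsetIr _ _)).
Qed.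

Hypothesis selfnormZ :
  forall Y : {group gT}, 'Z(G) \proper Y -> Y \subset G -> 'N_G(Y) = Y.

Lemma subcent1_abelian x : x \in G -> x \notin 'Z(G) -> abelian 'C_G[x].
Proof.
move=> Gx nZx; set C := 'C_G[x].
have prZ : 'Z(G) \proper 'Z(C).
  rewrite properE subsetI center_sub_subcent1 //= centsC.
  apply/andP; split; first by rewrite (subset_trans (subcent1_sub x G)) // centsC subsetIr.
  by apply/subsetPn; exists x; rewrite // inE subcent1_id //= -sub_cent1 subsetIr.
have nZC : C \subset 'N_G('Z(C)) by rewrite subsetI subcent1_sub gFnorm.
rewrite selfnormZ // in nZC; last exact: subset_trans (center_sub C) (subcent1_sub x G).
exact: subset_trans nZC (subsetIr _ _).
Qed.

Lemma subcent1_max x (K : {group gT}) : x \in G -> x \notin 'Z(G) ->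
  'Z(G) \proper K -> K \subset 'C_G[x] -> K :=: 'C_G[x].
Proof.
move=> Gx nZx prK sKC; apply/eqP; rewrite eqEsubset sKC /=.
rewrite -(selfnormZ prK (subset_trans sKC (subcent1_sub x G))) subsetI subcent1_sub.
exact/cents_norm/subset_trans/centS/sKC/subcent1_abelian.
Qed.

Lemma subcent1_eq x y : x \in G -> x \notin 'Z(G) -> y \in 'C_G[x] -> y \notin 'Z(G) ->
  'C_G[y] = 'C_G[x].
Proof.
move=> Gx nZx Cy nZy; have Gy := subsetP (subcent1_sub x G) y Cy.
apply/esym/(subcent1_max (K := 'C_G[x]%G) Gy nZy (center_proper_subcent1 Gx nZx)).
by rewrite subsetI subcent1_sub sub_cent1 (subsetP (subcent1_abelian Gx nZx)).
Qed.

Lemma subcent1_selfnorm x : x \in G -> x \notin 'Z(G) -> 'N_G('C_G[x]) = 'C_G[x].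
Proof. by move=> Gx nZx; rewrite selfnormZ ?center_proper_subcent1 ?subcent1_sub. Qed.

Lemma subcent1_normedTI x : x \in G -> x \notin 'Z(G) ->
  normedTI ('C_G[x] :\: 'Z(G)) G 'C_G[x].
Proof.
move=> Gx nZx; apply/normedTI_memJ_P; split.
- by apply/set0Pn; exists x; rewrite inE nZx subcent1_id.
- exact: subcent1_sub.
move=> a g /setDP[Ca nZa] Gg; apply/idP/idP => [/setDP[Cag nZag] | Cg].
  suff : g \in 'N_G('C_G[x]) by rewrite subcent1_selfnorm.
  rewrite inE Gg; apply/normP.
  by rewrite -{1}(subcent1_eq Gx nZx Ca nZa) -subcent1J // (subcent1_eq Gx nZx Cag nZag).
rewrite /conjg (centsP (subcent1_abelian Gx nZx) a Ca g Cg) mulKg.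
by rewrite inE nZa.
Qed.

Lemma subcent1_class_support x a : x \in G -> x \notin 'Z(G) -> a \in S x ->
  exists2 g, g \in G & 'C_G[a] = 'C_G[x] :^ g.
Proof.
move=> Gx nZx /imset2P[b g /setDP[Cb nZb] Gg ->]; exists g => //.
by rewrite subcent1J // (subcent1_eq Gx nZx Cb nZb).
Qed.

Lemma class_support_subcent1_disjoint x y : x \in G -> x \notin 'Z(G) ->
  y \in G -> y \notin 'Z(G) -> y \notin S x -> S x :&: S y = set0.
Proof.
move=> Gx nZx Gy nZy; apply: contraNeq => /set0Pn[a /setIP[Sxa Sya]].
have [g Gg eCx] := subcent1_class_support Gx nZx Sxa.
have [h Gh eCy] := subcent1_class_support Gy nZy Sya.
apply: (mem_class_support_subcent1 (g := g * h^-1)) => //; first by rewrite groupM ?groupV.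
by rewrite conjsgM -eCx eCy conjsgK.
Qed.

Lemma card_class_support_subcent1 x : x \in G -> x \notin 'Z(G) ->
  #|S x| = ((#|'C_G[x]| - #|'Z(G)|) * #|G : 'C_G[x]|)%N.
Proof.
move=> Gx nZx; rewrite (card_support_normedTI (subcent1_normedTI Gx nZx)) cardsD.
by rewrite (setIidPr (center_sub_subcent1 Gx)).
Qed.

Lemma card_class_support_subcent1_bounds x : x \in G -> x \notin 'Z(G) ->
  (#|G| <= 2 * #|S x|)%N /\ (#|'Z(G)| + #|S x| < #|G|)%N.
Proof.
move=> Gx nZx; rewrite card_class_support_subcent1 //.
have iGC := indexg_subcent1_gt1 Gx nZx.
have /andP[sZC /negP nsCZ] := center_proper_subcent1 Gx nZx.
have iCZ : (1 < #|'C_G[x] : 'Z(G)|)%N by rewrite indexg_gt1; apply/negP.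
have Z_gt0 := cardG_gt0 'Z(G).
rewrite -(Lagrange (subcent1_sub x G)) -(Lagrange sZC).
move: iGC iCZ Z_gt0; rewrite /=; set i := #|G : _|; set k := #|_ : _|; set z := #|_|.
move=> *; split; nia.
Qed.

Lemma abelian_of_selfnorm_overgroups : abelian G.
Proof.
apply: contraT => nabG.
have [x Gx nZx] := noncentral_elt nabG.
have [ge_x lt_x] := card_class_support_subcent1_bounds Gx nZx.
have [y Gy] : exists2 y, y \in G & y \notin 'Z(G) :|: S x.
  apply/subsetPn/negP => /subset_leq_card.
  by rewrite cardsU center_class_support_disjoint cards0 subn0 leqNgt lt_x.
rewrite inE negb_or => /andP[nZy nSxy].
have [ge_y _] := card_class_support_subcent1_bounds Gy nZy.
have sZSG : 'Z(G) :|: (S x :|: S y) \subset G.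
  by rewrite !subUset center_sub !class_support_subG ?subDset ?subsetU ?subcent1_sub ?orbT.
move: (subset_leq_card sZSG).
rewrite cardsU setIUr !center_class_support_disjoint setU0 cards0 subn0.
rewrite cardsU (class_support_subcent1_disjoint Gx nZx Gy nZy nSxy) cards0 subn0.
have Z_gt0 : (0 < #|'Z(G)|)%N := cardG_gt0 _.
move: ge_x ge_y Z_gt0; set g := #|G|; set z := #|'Z(G)|; set a := #|S x|; set b := #|S y|.
lia.
Qed.

End SelfNormalizingOvergroups.

Lemma exists_nonselfnorm_overgroup_center (gT : finGroupType) (G : {group gT}) :
  ~~ abelian G -> exists Y : {group gT}, [/\ 'Z(G) \proper Y, Y \subset G & 'N_G(Y) != Y].
Proof.
move=> nabG.
have [Y /and3P[prZY sYG nNY] | noY] :=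
  pickP (fun Y : {group gT} => [&& 'Z(G) \proper Y, Y \subset G & 'N_G(Y) != Y]).
  by exists Y.
case/negP: nabG; apply: abelian_of_selfnorm_overgroups => Y prZY sYG.
by apply/eqP; move: (noY Y); rewrite prZY sYG /= => /negbFE.
Qed.

Section Nilpotent.
Variables (gT : finGroupType) (G : {group gT}).
Hypothesis nilG : nilpotent G.

Lemma nilpotent_maximal_normal (M : {group gT}) : maximal M G -> M <| G.
Proof.
case/maxgroupP=> prM maxM; have prMN := nilpotent_proper_norm nilG prM.
rewrite /normal (proper_sub prM); have [prNG | ] := boolP ('N_G(M) \proper G).
  have eNM : 'N_G(M) = M := maxM 'N_G(M)%G prNG (proper_sub prMN).
  by rewrite eNM properxx in prMN.
by rewrite properEneq subsetIl andbT negbK => /eqP <-; apply: subsetIr.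
Qed.

Lemma nilpotent_nonselfnorm (Y : {group gT}) :
  Y \proper G -> ~~ (Y \subset 'Z(G)) -> (Y : {set gT}) \in nonselfnorm_subgroups G.
Proof.
move=> prY nzY; rewrite nonselfnorm_noncentral ?(proper_sub prY) //.
by apply: contraTneq (nilpotent_proper_norm nilG prY) => ->; rewrite properxx.
Qed.

Lemma nilpotent_noncentral_classes : ~~ abelian G ->
  exists Y1 Y2 : {group gT},
   [/\ (Y1 : {set gT}) \in nonselfnorm_subgroups G, (Y2 : {set gT}) \in nonselfnorm_subgroups G,
       ~~ (Y1 \subset 'Z(G)), ~~ (Y2 \subset 'Z(G)) & Y1 :^: G != Y2 :^: G].
Proof.
move=> nabG.
have [x Gx nZx] := noncentral_elt nabG.
have cycle_proper z : z \in G -> <[z]> \proper G.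
  move=> Gz; rewrite properEneq cycle_subG Gz andbT.
  by apply: contra nabG => /eqP <-; apply: cycle_abelian.
have [eXG | [M maxM sXM]] := maximal_exists (proper_sub (cycle_proper x Gx)).
  by move: (cycle_proper x Gx); rewrite eXG properxx.
have nMG := normal_norm (nilpotent_maximal_normal maxM).
have nzM : ~~ (M \subset 'Z(G)) by apply: contra nZx => /(subset_trans sXM); rewrite cycle_subG.
have [y [Gy nMy nZy]] : exists y, [/\ y \in G, y \notin M & y \notin 'Z(G)].
  have [y0 Gy0 nMy0] := subsetPn (proper_subn (maxgroupp maxM)).
  have Mx : x \in M by rewrite -cycle_subG.
  have [Zy0 | ] := boolP (y0 \in 'Z(G)); last by exists y0.
  by exists (x * y0); split; [rewrite groupM | rewrite groupMl | rewrite groupMr].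
have nzY : ~~ (<[y]> \subset 'Z(G)) by rewrite cycle_subG.
exists M, <[y]>%G; split; rewrite ?nilpotent_nonselfnorm ?cycle_proper ?(maxgroupp maxM) //.
apply: contraNneq nMy => eMY; have := conjugates_refl G <[y]>.
by rewrite -eMY (conjugates_norm nMG) inE => /eqP <-; apply: cycle_id.
Qed.

End Nilpotent.

Section CenterInCycles.
Variables (gT : finGroupType) (G : {group gT}).

(* If 'Z(G) lies in every cyclic subgroup generated by a noncentral element, then
   for a prime p dividing |Z(G)| every p'-element of G is central, so G / 'Z(G) is
   a p-group. *)
Lemma nilpotent_center_sub_cycles :
  'Z(G) != 1 -> {in G :\: 'Z(G), forall x, 'Z(G) \subset <[x]>} -> nilpotent G.
Proof.
move=> ntZ sZX; have [eZ1 | [p p_pr p_dvd]] := trivgVpdiv 'Z(G).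
  by rewrite eZ1 eqxx in ntZ.
have nZG := normal_norm (center_normal G).
have Gconstt pi g : g \in G -> g.`_pi \in G.
  by move=> Gg; apply: subsetP (cycle_constt pi g); rewrite cycle_subG.
have Zconstt g : g \in G -> g.`_p^' \in 'Z(G).
  move=> Gg; apply: contraT => nZg.
  have p'Z : p^'.-group 'Z(G).
    apply: pgroupS (sZX _ _) (p_elt_constt p^' g).
    by apply/setDP; split; rewrite ?Gconstt.
  by rewrite /pgroup p'natE // p_dvd in p'Z.
rewrite -quotient_center_nil; apply: (pgroup_nil (p := p)).
apply/pgroupP => q q_pr /Cauchy[//| _ /morphimP[g Ng Gg ->] oZg].
rewrite -(pnatE _ q_pr) -oZg /=.
have -> : coset 'Z(G) g = coset 'Z(G) g.`_p.
  rewrite -{1}(consttC p g) morphM ?(subsetP nZG) ?Gconstt //.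
  by rewrite /= (coset_id (Zconstt g Gg)) mulg1.
exact: morph_p_elt (subsetP nZG _ (Gconstt p g Gg)) (p_elt_constt p g).
Qed.

End CenterInCycles.

Lemma cycle_nonselfnorm (gT : finGroupType) (G : {group gT}) x :
  x \in G -> x \notin 'Z(G) -> ~~ ('Z(G) \subset <[x]>) ->
  (<[x]> : {set gT}) \in nonselfnorm_subgroups G.
Proof.
move=> Gx nZx nsZX; rewrite nonselfnorm_noncentral ?cycle_subG //.
apply: contraNneq nsZX => <-; rewrite subsetI center_sub cents_norm //.
rewrite centsC cycle_subG; apply: (subsetP _ x Gx).
by rewrite centsC subsetIr.
Qed.

Theorem mainTheorem11 (gT : finGroupType) (G : {group gT}) :
  ~~ abelian G -> 'Z(G) != 1 -> (calD 'Z(G) + 3 <= calD G)%N.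
Proof.
move=> nabG ntZ; have [nilG | not_nilG] := boolP (nilpotent G).
  have [Y1 [Y2 [nsY1 nsY2 nzY1 nzY2 neY12]]] := nilpotent_noncentral_classes nilG nabG.
  exact: calD_center_add3 nsY1 nsY2 nzY1 nzY2 neY12.
have [x /setDP[Gx nZx] nsZX] : exists2 x, x \in G :\: 'Z(G) & ~~ ('Z(G) \subset <[x]>).
  apply/exists_inP; apply: contraR not_nilG => /exists_inPn sZX.
  by apply: nilpotent_center_sub_cycles ntZ _ => y /sZX /negPn.
have [Y [prZY sYG nNY]] := exists_nonselfnorm_overgroup_center nabG.
have [sZY nsYZ] := andP prZY.
apply: (calD_center_add3 nabG ntZ (cycle_nonselfnorm Gx nZx nsZX)
          (nonselfnorm_noncentral sYG nsYZ nNY)) => //; first by rewrite cycle_subG.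
by rewrite eq_sym (conjugates_neq_norm_sub (normal_norm (center_normal G)) sZY).
Qed.
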